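(* Let $p$ be an odd prime and $G$ a group of order $p^4$. (a) $\operatorname{rdim}(G) \le p+1$. (b) If $Z(G) \cong (\mathbb{Z}/p\mathbb{Z})^2$ and $G/Z(G) \cong (\mathbb{Z}/p\mathbb{Z})^2$, then $\operatorname{rdim}(G) = p+1$.
   Context: $\operatorname{rdim}(G)$ is the minimal dimension of a faithful complex linear representation of $G$. *)

From HB Require Import structures.
From mathcomp Require Import all_boot all_order all_algebra all_fingroup all_solvable all_field all_character.
From Stdlib Require Import ClassicalEpsilon.
Set Implicit Arguments. Unset Strict Implicit. Unset Printing Implicit Defensive.

Definition has_faithful_rep (gT : finGroupType) (G : {group gT}) (n : nat) : Prop :=
  exists rG : mx_representation algC G n, mx_faithful rG.

Definition has_faithful_repb (gT : finGroupType) (G : {group gT}) (n : nat) : bool :=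
  if excluded_middle_informative (has_faithful_rep G n) then true else false.

Lemma has_faithful_rep_regular (gT : finGroupType) (G : {group gT}) :
  exists n, has_faithful_repb G n.
Proof.
exists #|G|; rewrite /has_faithful_repb.
case: excluded_middle_informative => // [[]].
by exists (regular_repr algC G); exact: regular_mx_faithful.
Qed.

Definition rdim (gT : finGroupType) (G : {group gT}) : nat :=
  ex_minn (has_faithful_rep_regular G).

(* In a p-group a normal subgroup meeting 'Z(G) trivially is
   trivial, so a character is faithful as soon as its constituents separate
   the points of 'Z(G).  For #|G| = p^4 every irreducible degree is at most p,
   as 'chi(1)^2 <= #|G : 'Z(G)| <= p^3.  If G is abelian, four linear
   characters suffice (p >= 3); if 'Z(G) is cyclic, one faithful irreducible
   character does.  Otherwise 'Z(G) has order p^2 and G^`(1) is cyclic, hence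
   does not contain the noncyclic 'Z(G); so some linear character is
   nontrivial on 'Z(G), and one more irreducible character of degree at most p
   kills the remaining subgroup of order p: total degree p + 1.
   Part (b).  A faithful character of the nonabelian group G has a nonlinear
   constituent, of degree at least p, and is not irreducible because 'Z(G) is
   not cyclic. *)

From mathcomp Require Import all_boot all_order all_algebra all_fingroup all_solvable all_field all_character.
From mathcomp Require Import zify.
From Stdlib Require Import ClassicalEpsilon.
Set Implicit Arguments. Unset Strict Implicit. Unset Printing Implicit Defensive.
Import GroupScope Order.TTheory GRing.Theory Num.Theory.

Section Characters.

Variables (gT : finGroupType) (G : {group gT}).
Local Open Scope ring_scope.

Lemma rdim_min n : has_faithful_rep G n -> (rdim G <= n)%N.
Proof.
move=> rGn; rewrite /rdim; case: ex_minnP => m _; apply.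
by rewrite /has_faithful_repb; case: excluded_middle_informative.
Qed.

Lemma rdim_faithful : has_faithful_rep G (rdim G).
Proof.
rewrite /rdim; case: ex_minnP => m; rewrite /has_faithful_repb.
by case: excluded_middle_informative.
Qed.

Lemma faithful_rep_char n :
  has_faithful_rep G n ->
  exists2 chi : 'CF(G), chi \is a character & cfker chi \subset [1] /\ chi 1%g = n%:R.
Proof.
case=> rG ffulG; exists (cfRepr rG); first exact: cfRepr_char.
by rewrite cfker_repr cfRepr1.
Qed.

Lemma rdim_le_char (chi : 'CF(G)) n :
  chi \is a character -> cfker chi \subset [1] -> chi 1%g <= n%:R -> (rdim G <= n)%N.
Proof.
case/char_reprP=> [[m rG] ->] ker1; rewrite cfRepr1 ler_nat => le_mn.
apply: leq_trans le_mn; apply: rdim_min; exists rG.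
by rewrite /mx_faithful -cfker_repr.
Qed.

Lemma cfker_charD (phi psi : 'CF(G)) :
  phi \is a character -> psi \is a character ->
  cfker (phi + psi) = cfker phi :&: cfker psi.
Proof.
have cfker_charDr (phi1 psi1 : 'CF(G)) : phi1 \is a character -> psi1 \is a character ->
    cfker (phi1 + psi1) \subset cfker psi1.
  move=> Nphi1 Npsi1; rewrite (cfkerE Npsi1) subsetI cfker_sub /=.
  apply/bigcapsP=> j psi1_j; apply: cfker_constt; first by rewrite rpredD.
  have [chi Nchi ->] := constt_charP j Npsi1 psi1_j.
  apply/constt_charP; first by rewrite !rpredD ?irr_char.
  by exists (phi1 + chi); rewrite ?rpredD // addrCA.
move=> Nphi Npsi; apply/eqP; rewrite eqEsubset cfker_add subsetI cfker_charDr //.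
by rewrite addrC cfker_charDr.
Qed.

Lemma lin_irr_notin_cfker z :
    z \in G -> z \notin G^`(1)%g ->
  exists2 i : Iirr G, 'chi_i \is a linear_char & z \notin cfker 'chi_i.
Proof.
move=> Gz G'z; apply/exists_inP; apply: contraR G'z => /exists_inPn kerz.
by rewrite -cap_cfker_lin_irr; apply/bigcapP=> i /kerz/negPn.
Qed.

End Characters.

Section PGroupCharacters.

Variables (p : nat) (gT : finGroupType) (G : {group gT}).
Hypotheses (p_pr : prime p) (pG : p.-group G).
Local Open Scope ring_scope.

Lemma irr1_pexp i : exists m, 'chi[G]_i 1%g = (p ^ m)%:R.
Proof.
have := dvd_irr1_cardG i; rewrite irr1_degree dvdC_nat (card_pgroup pG).
by case/(dvdn_pfactor _ _ p_pr) => m _ ->; exists m.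
Qed.

Lemma irr1_ge_prime i : 'chi[G]_i \isn't a linear_char -> p%:R <= 'chi_i 1%g.
Proof.
rewrite qualifE/= irr_char /=; have [[|m] ->] := irr1_pexp i; first by rewrite eqxx.
by rewrite ler_nat expnS leq_pmulr ?expn_gt0 ?prime_gt0.
Qed.

(* Each added irreducible constituent strictly shrinks the part of M left in
   the kernel, so logn p #|M| constituents suffice. *)
Lemma char_cfker_TI (D : nat) (M : {group gT}) :
    M \subset G -> (forall i : Iirr G, 'chi_i 1%g <= D%:R) ->
  exists2 chi : 'CF(G), chi \is a character &
    chi 1%g <= (D * logn p #|M|)%N%:R /\ M :&: cfker chi = 1%g.
Proof.
move=> + leD; elim: {M}_.+1 {-2}M (ltnSn (logn p #|M|)) => // n IHn M leMn sMG.
have [-> | ntM] := eqVneq M 1%G.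
  by exists 0; rewrite ?cfun0_char // cfunE ler0n setI1g.
have [z Mz ntz] := trivgPn _ ntM.
have [i ker'z] : exists i, z \notin cfker 'chi[G]_i.
  apply/existsP; apply: contraR ntz => /existsPn kerz.
  have: z \in \bigcap_i cfker 'chi[G]_i by apply/bigcapP=> i _; apply/negPn/kerz.
  by rewrite TI_cfker_irr inE.
pose M1 := (M :&: cfker 'chi_i)%G.
have ltM1M : M1 \proper M by apply/properIl/subsetPn; exists z.
have ltM1 := properG_ltn_log (pgroupS sMG pG) ltM1M.
have [chi Nchi [chi1 tiM1]] :=
  IHn M1 (leq_trans ltM1 leMn) (subset_trans (proper_sub ltM1M) sMG).
exists ('chi_i + chi); first by rewrite rpredD ?irr_char.
rewrite cfker_charD ?irr_char // setIA tiM1; split=> //.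
rewrite cfunE (le_trans (lerD (leD i) chi1)) // -natrD ler_nat -mulnS.
by rewrite leq_mul2l ltM1 orbT.
Qed.

Lemma rdim_abelian_pgroup : abelian G -> (rdim G <= logn p #|G|)%N.
Proof.
move=> cGG; have lin1 i : 'chi[G]_i 1%g <= 1%:R.
  by rewrite lin_char1 ?lexx //; apply/char_abelianP.
have [chi Nchi [chi1 tiG]] := char_cfker_TI (subxx G) lin1.
apply: rdim_le_char Nchi _ _; last by rewrite mul1n in chi1.
by apply/trivgP; rewrite -tiG (setIidPr (cfker_sub chi)).
Qed.

Lemma rdim_cyclic_center_pgroup (D : nat) :
  cyclic 'Z(G) -> (forall i : Iirr G, 'chi_i 1%g <= D%:R) -> (rdim G <= D)%N.
Proof.
move=> cycZ leD; have [i ffuli] := pgroup_cyclic_faithful pG cycZ.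
by apply: rdim_le_char (irr_char i) _ (leD i); rewrite -cfaithfulE.
Qed.

Lemma rdim_pgroup_ge : ~~ abelian G -> ~~ cyclic 'Z(G) -> (p.+1 <= rdim G)%N.
Proof.
move=> not_cGG not_cycZ.
have [chi Nchi [ker1 chi1]] := faithful_rep_char (rdim_faithful G).
have [i /andP[chi_i nlin_i]] :
    exists i, (i \in irr_constt chi) && ('chi_i \isn't a linear_char).
  apply/existsP; apply: contraR not_cGG => /existsPn lin_chi.
  apply/derG1P/trivgP; apply: subset_trans ker1.
  rewrite cfkerE // subsetI der1_subG; apply/bigcapsP=> j chi_j.
  by apply: lin_char_der1; have := lin_chi j; rewrite chi_j negbK.
have [psi Npsi def_chi] := constt_charP i Nchi chi_i.
have psi1 : 1 <= psi 1%g.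
  have psi_nz : psi != 0.
    apply: contra not_cycZ => /eqP psi0; apply: (@irr_faithful_center _ _ i).
    by rewrite cfaithfulE -(addr0 'chi_i) -psi0 -def_chi.
  have /natrP[m def_m] := Cnat_char1 Npsi.
  by move: psi_nz; rewrite -char1_eq0 // def_m pnatr_eq0 ler1n lt0n.
rewrite -(ler_nat algC) -chi1 def_chi cfunE -addn1 natrD.
by rewrite lerD ?irr1_ge_prime.
Qed.

End PGroupCharacters.

Lemma prime_dvd_pfactor p k d : prime p -> d %| p ^ k -> 1 < d -> p %| d.
Proof.
move=> p_pr /(dvdn_pfactor _ _ p_pr)[[|i] _ ->]; first by rewrite expn0.
by rewrite expnS dvdn_mulr.
Qed.

Lemma index_center_p2_join_cycles p (gT : finGroupType) (G : {group gT}) :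
    prime p -> #|G : 'Z(G)| = (p ^ 2)%N ->
  exists x y, (<[x]> <*> <[y]>) <*> 'Z(G) = G.
Proof.
move=> p_pr iGZ; set Z := 'Z(G); have [sZG nZG] := andP (center_normal G).
have not_cycGZ : ~~ cyclic (G / Z).
  apply/negP=> /cyclic_center_factor_abelian cGG; move/eqP: iGZ.
  by rewrite /Z /center (setIidPl cGG) indexgg eq_sym -(expn0 p) eqn_exp2l ?prime_gt1.
have [x Gx Z'x] : exists2 x, x \in G & x \notin Z.
  by apply/subsetPn; rewrite -indexg_gt1 iGZ (ltn_exp2l 0) ?prime_gt1.
pose A := (<[x]> <*> Z)%G.
have [y Gy A'y] : exists2 y, y \in G & y \notin A.
  apply/subsetPn; apply: contra not_cycGZ => sGA.
  apply: cyclicS (quotientS Z sGA) _.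
  by rewrite /= quotientYidr ?quotient_cycle ?cycle_cyclic ?cycle_subG ?(subsetP nZG).
exists x, y; pose H := ((<[x]> <*> <[y]>) <*> Z)%G.
have sZA : Z \subset A := joing_subr _ _.
have sAH : A \subset H.
  by rewrite join_subG joing_subr (subset_trans (joing_subl _ <[y]>)) ?joing_subl.
have sHG : H \subset G by rewrite !join_subG !cycle_subG Gx Gy.
have iAZ : 1 < #|A : Z|.
  rewrite indexg_gt1; apply: contra Z'x => /subsetP; apply.
  by rewrite mem_gen ?inE ?cycle_id.
have iHA : 1 < #|H : A|.
  rewrite indexg_gt1; apply: contra A'y => /subsetP; apply.
  by rewrite mem_gen ?inE // mem_gen ?inE ?cycle_id ?orbT.
have dvdHZ : #|H : A| * #|A : Z| %| p ^ 2.
  by rewrite (Lagrange_index sAH sZA) -iGZ indexSg // (subset_trans sZA sAH).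
have iHZ : #|H : Z| = (p ^ 2)%N.
  apply/eqP; rewrite -(Lagrange_index sAH sZA) eqn_dvd dvdHZ expnS expn1 dvdn_mul //.
    exact: prime_dvd_pfactor (dvdn_trans (dvdn_mulr _ _) dvdHZ) iHA.
  exact: prime_dvd_pfactor (dvdn_trans (dvdn_mull _ _) dvdHZ) iAZ.
apply/eqP; rewrite eqEsubset sHG -indexg_eq1 -(eqn_pmul2r (indexg_gt0 H Z)).
by rewrite (Lagrange_index sHG (subset_trans sZA sAH)) iHZ mul1n; apply/eqP.
Qed.

(* G is the central product of <x, y> and 'Z(G), so G^`(1) = <x, y>^`(1) is
   generated by the central commutator [~ x, y]. *)
Lemma der1_cyclic_index_center p (gT : finGroupType) (G : {group gT}) :
  prime p -> #|G : 'Z(G)| = (p ^ 2)%N -> cyclic G^`(1).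
Proof.
move=> p_pr iGZ; have [x [y defG]] := index_center_p2_join_cycles p_pr iGZ.
have [sZG nZG] := andP (center_normal G).
pose X := (<[x]> <*> <[y]>)%G.
have sXG : X \subset G by rewrite -defG joing_subl.
have [Gx Gy] : x \in G /\ y \in G.
  by split; rewrite (subsetP sXG) // mem_gen // inE cycle_id ?orbT.
have cXZ : 'Z(G) \subset 'C(X) := subset_trans (subsetIr _ _) (centS sXG).
have sG'Z : G^`(1) \subset 'Z(G).
  by rewrite der1_min // (card_p2group_abelian p_pr) // card_quotient.
have defG' : G^`(1) = X^`(1).
  have := der_cprod 1 (cprodEY cXZ); rewrite /= defG.
  by rewrite (derG1P (center_abelian G)) cprodg1.
have cXxy : [~ x, y] \in 'C(X) by rewrite (subsetP cXZ) ?(subsetP sG'Z) ?mem_commg.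
by rewrite defG' (der1_joing_cycles cXxy) cycle_cyclic.
Qed.

Section OrderP4.

Variables (p : nat) (gT : finGroupType) (G : {group gT}).
Hypotheses (p_pr : prime p) (oG : #|G| = (p ^ 4)%N).
Local Open Scope ring_scope.

Let pG : p.-group G. Proof. by rewrite /pgroup oG pnatX pnat_id. Qed.

Lemma index_center_dvd_p3 : (#|G : 'Z(G)| %| p ^ 3)%N.
Proof.
have ntG : G :!=: 1%g by rewrite -cardG_gt1 oG (ltn_exp2l 0) ?prime_gt1.
have ntZ : 'Z(G) :!=: 1%g by rewrite (center_nil_eq1 (pgroup_nil pG)).
have [_ p_dvdZ _] := pgroup_pdiv (pgroupS (center_sub G) pG) ntZ.
rewrite -(dvdn_pmul2l (prime_gt0 p_pr)) -expnS -oG -(Lagrange (center_sub G)).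
by rewrite dvdn_mul.
Qed.

Lemma irr1_le_prime i : 'chi[G]_i 1%g <= p%:R.
Proof.
have [m chi1] := irr1_pexp p_pr pG i.
have sZ : 'Z(G) \subset 'Z('chi_i)%CF by rewrite -cap_cfcenter_irr bigcap_inf.
have : (p ^ m * p ^ m <= p ^ 3)%N.
  rewrite -(ler_nat algC) natrM -chi1 -expr2 (le_trans (irr1_bound i).1) // ler_nat.
  by rewrite dvdn_leq ?expn_gt0 ?prime_gt0 // (dvdn_trans (indexgS G sZ)) ?index_center_dvd_p3.
rewrite -expnD leq_exp2l ?prime_gt1 // chi1 ler_nat => le_m.
by rewrite -{2}(expn1 p) leq_exp2l ?prime_gt1 //; lia.
Qed.

Lemma card_center_p4 : ~~ abelian G -> ~~ cyclic 'Z(G) -> #|'Z(G)| = (p ^ 2)%N.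
Proof.
move=> not_cGG not_cycZ; have sZG := center_sub G.
have /(dvdn_pfactor _ _ p_pr)[a le_a4 oZ] : (#|'Z(G)| %| p ^ 4)%N by rewrite -oG cardSg.
have iZ : #|G : 'Z(G)| = (p ^ (4 - a))%N by rewrite -divgS // oG oZ expnB ?prime_gt0.
case: a le_a4 oZ iZ => [|[|[|[|[|]]]]] // _ oZ iZ.
- case/negP: not_cycZ; have /eqP-> : 'Z(G) :==: 1%g by rewrite trivg_card1 oZ.
  exact: cyclic1.
- by case/negP: not_cycZ; rewrite prime_cyclic ?oZ.
- case/negP: not_cGG; apply: cyclic_center_factor_abelian; rewrite prime_cyclic //.
  by rewrite card_quotient ?normal_norm ?center_normal // iZ.
- case/negP: not_cGG; rewrite /abelian (subset_trans _ (subsetIr G _)) //.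
  by rewrite -indexg_eq1 iZ.
Qed.

Lemma rdim_p4_noncyclic_center : ~~ abelian G -> ~~ cyclic 'Z(G) -> (rdim G <= p.+1)%N.
Proof.
move=> not_cGG not_cycZ; have oZ := card_center_p4 not_cGG not_cycZ.
have sZG := center_sub G.
have iZ : #|G : 'Z(G)| = (p ^ 2)%N by rewrite -divgS // oG oZ -expnB ?prime_gt0.
have [z Zz G'z] : exists2 z, z \in 'Z(G) & z \notin G^`(1)%g.
  apply/subsetPn; apply: contra not_cycZ => sZG'.
  exact: cyclicS sZG' (der1_cyclic_index_center p_pr iZ).
have [i lin_i ker'z] := lin_irr_notin_cfker (subsetP sZG z Zz) G'z.
pose M := ('Z(G) :&: cfker 'chi_i)%G.
have logM : (logn p #|M| <= 1)%N.
  have ltMZ : M \proper 'Z(G) by apply/properIl/subsetPn; exists z.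
  by have := properG_ltn_log (pgroupS sZG pG) ltMZ; rewrite oZ pfactorK.
have [chi Nchi [chi1 tiM]] :=
  char_cfker_TI pG (subset_trans (subsetIl _ _) sZG : M \subset G) irr1_le_prime.
apply: (@rdim_le_char _ _ ('chi_i + chi)); first by rewrite rpredD ?irr_char.
  apply/trivgP/(TI_center_nil (pgroup_nil pG) (cfker_normal _)).
  by rewrite /= cfker_charD ?irr_char // setIC setIA tiM.
rewrite cfunE lin_char1 // -add1n natrD lerD // (le_trans chi1) // ler_nat.
by rewrite -[leqRHS]muln1 leq_mul2l logM orbT.
Qed.

Lemma rdim_p4_le : odd p -> (rdim G <= p.+1)%N.
Proof.
move=> odd_p; have p_ge3 : (3 <= p)%N.
  by case: p p_pr odd_p => [|[|[|]]].
have [cGG | not_cGG] := boolP (abelian G).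
  by apply: leq_trans (rdim_abelian_pgroup pG cGG) _; rewrite oG pfactorK.
have [cycZ | not_cycZ] := boolP (cyclic 'Z(G)).
  exact: leq_trans (rdim_cyclic_center_pgroup pG cycZ irr1_le_prime) _.
exact: rdim_p4_noncyclic_center.
Qed.

End OrderP4.

Lemma Zp_prod_noncyclic p : prime p -> ~~ cyclic [set: 'Z_p * 'Z_p].
Proof.
move=> p_pr; apply/cyclicP=> -[x defZ2].
have oZp : #|[set: 'Z_p]| = p by rewrite cardsT card_ord Zp_cast ?prime_gt1.
have expx n : x ^+ n = (x.1 ^+ n, x.2 ^+ n).
  by elim: n => [|n IHn]; rewrite ?expgS ?IHn //; case: x {defZ2 IHn}.
have : #[x] %| p.
  have := expg_cardG (in_setT x.1); have := expg_cardG (in_setT x.2).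
  by rewrite order_dvdn oZp expx => -> ->.
rewrite /order -defZ2 cardsT card_prod card_ord Zp_cast ?prime_gt1 //.
by move/(dvdn_leq (prime_gt0 p_pr)); rewrite leqNgt ltn_Pmull ?prime_gt1 ?prime_gt0.
Qed.

Unset Implicit Arguments.

Theorem lemma3p2 (p : nat) (gT : finGroupType) (G : {group gT}) :
  prime p -> odd p -> #|G| = (p ^ 4)%N ->
  (rdim G <= p.+1)%N /\
  ('Z(G) \isog [set: 'Z_p * 'Z_p] ->
   (G / 'Z(G)) \isog [set: 'Z_p * 'Z_p] ->
   rdim G = p.+1).
Proof.
move=> p_pr odd_p oG; have le_rdim := rdim_p4_le p_pr oG odd_p.
split=> // isoZ _; apply/eqP; rewrite eqn_leq le_rdim /=.
have pG : p.-group G by rewrite /pgroup oG pnatX pnat_id.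
have not_cycZ : ~~ cyclic 'Z(G) by rewrite (isog_cyclic isoZ) Zp_prod_noncyclic.
have not_cGG : ~~ abelian G.
  apply/negP=> cGG; have := card_isog isoZ.
  rewrite /= /center (setIidPl cGG) oG cardsT card_prod card_ord Zp_cast ?prime_gt1 //.
  by move/eqP; rewrite mulnn eqn_exp2l ?prime_gt1.
exact: rdim_pgroup_ge p_pr pG not_cGG not_cycZ.
Qed.
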